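(* Fix $0<q<1$. Let $\psi$ be a measurable function on $[1,\infty)$ with $\psi\ge0$, $\psi$ not identically $0$, and $\sup_{\mu\ge1}\{\psi(\mu)/\mu\}<\infty$. Then for $G=E\#F\in\mathcal G$ and $0<\tau<T_q(G)$, $$\int\psi(\mu)\big[e^{-\tau/\mu}-e^{-T_q(G)/\mu}\big]\,dF(\mu)\le\frac1q\sup_{\mu\ge1}\{\psi(\mu)/\mu\}\cdot\frac{\tau e^{-\tau}}{1-e^{-\tau}}.$$
   Context: $E(t)=1-e^{-t}$, $\bar E=1-E$, $\bar G=1-G$. $\mathcal G=\{E\#F:F$ a probability distribution on $[1,\infty)\}$ with $(E\#F)(t)=\int E(t/\mu)\,dF(\mu)$. FDR functional $T_q(G)=\inf\{t:\bar G(t)\ge\frac1q\bar E(t)\}$. *)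

From HB Require Import structures.
From mathcomp Require Import all_boot all_order all_algebra.
From mathcomp Require Import all_classical all_reals all_analysis.
Set Implicit Arguments. Unset Strict Implicit. Unset Printing Implicit Defensive.
Import Order.TTheory GRing.Theory Num.Theory.
Local Open Scope classical_set_scope.
Local Open Scope ring_scope.

Section Defs.
Variable R : realType.

Definition Ecdf (t : R) : R := 1 - expR (- t).
Definition Ebar (t : R) : R := 1 - Ecdf t.

Definition mixG (F : probability R R) (t : R) : \bar R :=
  (\int[F]_(mu in setT) (Ecdf (t / mu))%:E)%E.

(* FDR functional T_q(G) = inf { t : Gbar(t) >= Ebar(t)/q }  (inf of empty set = +oo) *)
Definition Tq (q : R) (G : R -> \bar R) : \bar R :=
  ereal_inf [set t%:E | t in [set t : R | ((q^-1 * Ebar t)%:E <= 1 - G t)%E]].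
End Defs.

Definition halfline1 (R : realType) : set R := `[1%R, +oo[%classic.

(* For mu >= 1 and T = T_q(G), mu (e^{-tau/mu} - e^{-T/mu}) is the integral of
   the decreasing function t |-> e^{-t/mu} over [tau, T], hence at most its left
   Riemann sum on the grid tau, 2 tau, ..., i.e. the sum of tau e^{-k tau/mu}
   over k >= 1 with k tau < T.  Bound psi(mu) by s mu, s the supremum of
   psi(mu)/mu, and integrate term by term against F: the integral of
   e^{-k tau/mu} is the survival function 1 - G(k tau), which is below
   Ebar(k tau)/q = e^{-k tau}/q because k tau < T_q(G).  Summing the resulting
   geometric series gives (s/q) tau e^{-tau}/(1 - e^{-tau}). *)

From HB Require Import structures.
From mathcomp Require Import all_boot all_order all_algebra.
From mathcomp Require Import all_classical all_reals all_analysis.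
From mathcomp Require Import measurable_realfun ring lra.
Set Implicit Arguments. Unset Strict Implicit. Unset Printing Implicit Defensive.
Import Order.TTheory GRing.Theory Num.Theory.
Local Open Scope classical_set_scope.
Local Open Scope ring_scope.

Section expR_bounds.
Variable R : realType.

Lemma expR_Ndiv_subr_le (mu a b : R) : 0 < mu ->
  mu * (expR (- a / mu) - expR (- b / mu)) <= (b - a) * expR (- a / mu).
Proof.
move=> mu0; have mu_neq0 : mu != 0 by rewrite gt_eqF.
have -> : - b / mu = - a / mu + - ((b - a) / mu) by field.
have ge1D := expR_ge1Dx (- ((b - a) / mu)).
rewrite expRD; set E := expR (- a / mu); set X := expR _ in ge1D *.
have -> : mu * (E - E * X) = (mu * E) * (1 - X) by ring.
have -> : (b - a) * E = (mu * E) * ((b - a) / mu) by field.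
apply: ler_wpM2l; first by rewrite mulr_ge0 ?expR_ge0 ?ltW.
lra.
Qed.

Lemma mul_expR_Ndiv_le (mu s : R) : 0 < mu -> 0 < s ->
  mu * expR (- s / mu) <= mu ^+ 2 / s.
Proof.
move=> mu0 s0; set x := s / mu; have x0 : 0 < x by rewrite divr_gt0.
have expRNx_le : expR (- x) * x <= 1.
  rewrite expRN ler_pdivrMl ?expR_gt0 // mulr1.
  by have := expR_ge1Dx x; lra.
have -> : mu ^+ 2 / s = mu / x by rewrite /x; field; rewrite !gt_eqF.
by rewrite mulNr -/x ler_pdivlMr // -mulrA ler_piMr // ltW.
Qed.

End expR_bounds.

Lemma nneseries_geometric_le (R : realType) (a x : R) : 0 <= a -> 0 < x -> x < 1 ->
  (\sum_(i <oo) (geometric a x i)%:E <= (a / (1 - x))%:E)%E.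
Proof.
move=> a0 x0 x1; apply: lime_le.
  apply: is_cvg_nneseries => i _ _.
  by rewrite lee_fin /geometric /= mulr_ge0 // exprn_ge0 // ltW.
apply: nearW => n; rewrite sumEFin lee_fin.
by apply: geometric_le_lim => //; rewrite ger0_norm // ltW.
Qed.

Lemma integral_setT_full (d : measure_display) (T : measurableType d) (R : realType)
    (P : probability T R) (D : set T) (f : T -> \bar R) :
  measurable D -> P D = 1%E -> measurable_fun [set: T] f ->
  (\int[P]_(x in [set: T]) f x = \int[P]_(x in D) f x)%E.
Proof.
move=> mD PD mf; rewrite [RHS]integral_mkcond; apply: ae_eq_integral => //.
  by apply/(measurable_restrictT _ mD); exact: measurable_funS mf.
exists (~` D); split; first exact: measurableC.
  by have := probability_setC P mD; rewrite PD subee.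
by move=> x /= fx_neq Dx; apply: fx_neq => _; rewrite /patch mem_set.
Qed.

Section measurable_reciprocal.
Variable R : realType.

Lemma measurable_invr : measurable_fun [set: R] (@GRing.inv R).
Proof.
rewrite -(setUv [set 0]) setUC.
apply/measurable_funU => //; first exact: measurableC.
split.
  apply: open_continuous_measurable_fun; last first.
    by move=> x /[!inE] /eqP x_neq0; exact: inv_continuous.
  exact/closed_openC/accessible_closed_set1/hausdorff_accessible/Rhausdorff.
apply: (eq_measurable_fun (cst (0 : R))) (measurable_cst _) => x /[!inE] ->.
by rewrite invr0.
Qed.

Lemma measurable_expR_div (a : R) :
  measurable_fun [set: R] (fun mu => expR (a / mu)).
Proof.
by apply: measurableT_comp => //; apply: measurable_funM => //; exact: measurable_invr.
Qed.

End measurable_reciprocal.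

Lemma halfline1P (R : realType) (mu : R) : @halfline1 R mu <-> 1 <= mu.
Proof. by rewrite /halfline1 /= in_itv /= andbT. Qed.

Lemma measurable_halfline1 (R : realType) : measurable (@halfline1 R).
Proof. exact: measurable_itv. Qed.

Section riemann_sum.
Variables (R : realType) (tau mu : R).
Hypotheses (tau0 : 0 < tau) (mu0 : 0 < mu).

(* The terms of the left-endpoint Riemann sum, on the grid [tau * N], of the
   integral of the decreasing function [t |-> e^{-t/mu}] over [[tau, T]]; the
   integral itself is [mu * expR_gap T], so the sum dominates it. *)
Definition riemann_term (T : \bar R) (i : nat) : R :=
  if ((i.+1%:R * tau)%:E < T)%E then tau * expR (- (i.+1%:R * tau) / mu) else 0.

Definition expR_gap (T : \bar R) : R :=
  expR (- tau / mu) - (if T is t%:E then expR (- t / mu) else 0).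

Lemma riemann_term_ge0 T i : 0 <= riemann_term T i.
Proof.
by rewrite /riemann_term; case: ifP => // _; rewrite mulr_ge0 ?expR_ge0 // ltW.
Qed.

Lemma le_riemann_term T1 T2 i : (T1 <= T2)%E ->
  riemann_term T1 i <= riemann_term T2 i.
Proof.
move=> T12; rewrite /riemann_term; case: ifPn => [lt1|_].
  by rewrite (lt_le_trans lt1 T12).
by case: ifP => // _; rewrite mulr_ge0 ?expR_ge0 // ltW.
Qed.

Lemma riemann_term_ge_slice (t : R) i :
  mu * (expR (- Num.min (i.+1%:R * tau) t / mu)
        - expR (- Num.min (i.+2%:R * tau) t / mu)) <= riemann_term t%:E i.
Proof.
have next : i.+2%:R * tau = i.+1%:R * tau + tau.
  by rewrite -[i.+2]addn1 natrD mulrDl mul1r.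
rewrite /riemann_term lte_fin; case: ltP => [lt_t|ge_t].
  apply: le_trans (expR_Ndiv_subr_le _ _ mu0) _.
  by rewrite ler_wpM2r ?expR_ge0 // lerBlDl -next ge_min lexx.
have -> : Num.min (i.+2%:R * tau) t = t.
  by apply: min_r; rewrite next (le_trans ge_t) // lerDl ltW.
by rewrite subrr mulr0.
Qed.

Lemma riemann_partial_sum_ge (t : R) n :
  mu * (expR (- tau / mu) - expR (- Num.min (n.+1%:R * tau) t / mu))
    <= \sum_(i < n) riemann_term t%:E i.
Proof.
elim: n => [|n IH].
  rewrite big_ord0 mul1r pmulr_rle0 // subr_le0 ler_expR !mulNr lerN2.
  by rewrite ler_pM2r ?invr_gt0 // ge_min lexx.
rewrite big_ord_recr /=; apply: le_trans (lerD IH (riemann_term_ge_slice t n)).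
by rewrite -mulrDr addrA subrK.
Qed.

Lemma riemann_series_ge (T : \bar R) (t : R) : 0 <= t -> (t%:E <= T)%E ->
  ((mu * (expR (- tau / mu) - expR (- t / mu)))%:E
     <= \sum_(i <oo) (riemann_term T i)%:E)%E.
Proof.
move=> t0 tT; pose n := Num.bound (t / tau).
have t_le : t <= n.+1%:R * tau.
  rewrite -ler_pdivrMr //; apply/ltW/(lt_le_trans (archi_boundP _)).
    by rewrite divr_ge0 // ltW.
  by rewrite ler_nat.
have := riemann_partial_sum_ge t n.
have -> : Num.min (n.+1%:R * tau) t = t by exact: min_r.
move=> partial; apply: le_trans (nneseries_lim_ge n _); last first.
  by move=> k _ _; rewrite lee_fin riemann_term_ge0.
rewrite big_mkord sumEFin lee_fin (le_trans partial) // ler_sum // => i _.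
exact: le_riemann_term.
Qed.

Lemma expR_gapE T : (tau%:E < T)%E ->
  ((expR (- tau / mu))%:E - expeR (- (T * (mu^-1)%:E)))%E = (expR_gap T)%:E.
Proof.
case: T => [t| |] //= _; first by rewrite -EFinD /expR_gap !mulNr.
by rewrite mulyr gtr0_sg ?invr_gt0 // mul1e /= sube0 /expR_gap subr0.
Qed.

Lemma expR_gap_ge0 T : (tau%:E < T)%E -> 0 <= expR_gap T.
Proof.
rewrite /expR_gap; case: T => [t| |] //= tT.
by rewrite subr_ge0 ler_expR !mulNr lerN2 ler_pM2r ?invr_gt0 // ltW.
Qed.

Lemma riemann_series_ge_gap T : (tau%:E < T)%E ->
  ((mu * expR_gap T)%:E <= \sum_(i <oo) (riemann_term T i)%:E)%E.
Proof.
case: T => [t| |] // tT.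
  by apply: riemann_series_ge => //; apply/ltW/(lt_trans tau0); rewrite -lte_fin.
(* For T = +oo, truncate at t = mu^2/e, beyond which the tail is at most e. *)
rewrite /expR_gap subr0; apply/lee_addgt0Pr => e e0.
have t_gt0 : 0 < mu ^+ 2 / e by rewrite divr_gt0 // exprn_gt0.
set t := mu ^+ 2 / e in t_gt0 *.
have -> : mu * expR (- tau / mu)
    = mu * (expR (- tau / mu) - expR (- t / mu)) + mu * expR (- t / mu) by ring.
rewrite EFinD leeD //; first exact: riemann_series_ge (ltW t_gt0) (leey _).
rewrite lee_fin; apply: le_trans (mul_expR_Ndiv_le mu0 t_gt0) _.
by rewrite /t invf_div mulrC divfK // expf_neq0 // gt_eqF.
Qed.

Lemma le_mul_riemann_series (c s : R) T : 0 <= s -> c <= s * mu ->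
  (tau%:E < T)%E ->
  ((c * expR_gap T)%:E <= s%:E * \sum_(i <oo) (riemann_term T i)%:E)%E.
Proof.
move=> s0 c_le tT; apply: (@le_trans _ _ (s%:E * (mu * expR_gap T)%:E)%E).
  by rewrite -EFinM lee_fin mulrA ler_wpM2r ?expR_gap_ge0.
by rewrite lee_wpmul2l ?lee_fin ?riemann_series_ge_gap.
Qed.

End riemann_sum.

Section measurable_riemann.
Variable R : realType.

Lemma measurable_riemann_term (tau : R) T i :
  measurable_fun [set: R] (fun mu => riemann_term tau mu T i).
Proof.
rewrite /riemann_term; case: (boolP (_ < T)%E) => _; last exact: measurable_cst.
by apply: measurable_funM => //; exact: measurable_expR_div.
Qed.

Lemma measurable_expR_gap (tau : R) T :
  measurable_fun [set: R] (fun mu => expR_gap tau mu T).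
Proof.
apply: measurable_funB; first exact: measurable_expR_div.
by case: T => [t| |]; [exact: measurable_expR_div | exact: measurable_cst ..].
Qed.

Lemma measurable_riemann_series (tau : R) T : 0 < tau ->
  measurable_fun [set: R] (fun mu => \sum_(i <oo) (riemann_term tau mu T i)%:E)%E.
Proof.
move=> tau0; apply: ge0_emeasurable_sum => [i mu _ _|i _].
  by rewrite lee_fin riemann_term_ge0.
by apply/measurable_EFinP; exact: measurable_riemann_term.
Qed.

End measurable_riemann.

Lemma EbarE (R : realType) (t : R) : Ebar t = expR (- t).
Proof. by rewrite /Ebar /Ecdf opprB addrC subrK. Qed.

Lemma lt_Tq_tail (R : realType) (q : R) (G : R -> \bar R) (r : R) :
  (r%:E < Tq q G)%E -> (1 - G r < (q^-1 * expR (- r))%:E)%E.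
Proof.
rewrite !ltNge; apply: contra => tail_ge; apply: ereal_inf_lbound.
by exists r => //=; rewrite EbarE.
Qed.

Section mixture_tail.
Variables (R : realType) (F : probability R R).
Hypothesis F_halfline1 : F (@halfline1 R) = 1%E.

Lemma mixG_tail (r : R) : 0 <= r ->
  (1 - mixG F r = \int[F]_(mu in @halfline1 R) (expR (- r / mu))%:E)%E.
Proof.
move=> r0; have mD := @measurable_halfline1 R.
have m_exp : measurable_fun [set: R] (fun mu => (expR (- r / mu))%:E).
  by apply/measurable_EFinP; exact: measurable_expR_div.
have m_cdf : measurable_fun [set: R] (fun mu => (Ecdf (r / mu))%:E).
  apply/measurable_EFinP/measurable_funB => //.
  by under eq_fun do rewrite -mulNr; exact: measurable_expR_div.
have cdf_ge0 mu : @halfline1 R mu -> (0 <= (Ecdf (r / mu))%:E)%E.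
  move=> /halfline1P mu1; rewrite lee_fin subr_ge0 expR_le1 oppr_le0.
  by rewrite divr_ge0 // (le_trans ler01).
have exp_ge0 mu : @halfline1 R mu -> (0 <= (expR (- r / mu))%:E)%E.
  by rewrite lee_fin expR_ge0.
have sum1 : (\int[F]_(mu in @halfline1 R) (expR (- r / mu))%:E
             + \int[F]_(mu in @halfline1 R) (Ecdf (r / mu))%:E = 1)%E.
  rewrite -ge0_integralD //; last 2 first.
  - exact: measurable_funTS m_exp.
  - exact: measurable_funTS m_cdf.
  under eq_integral do rewrite -EFinD /Ecdf mulNr addrC subrK.
  by rewrite integral_cst // mul1e.
have -> : mixG F r = (\int[F]_(mu in @halfline1 R) (Ecdf (r / mu))%:E)%E.
  exact: integral_setT_full.
have J_ge0 := integral_ge0 F cdf_ge0.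
rewrite -sum1 addeK // ge0_fin_numE //; apply: le_lt_trans (ltry 1).
by rewrite -sum1 leeDr // integral_ge0.
Qed.

Lemma integral_expR_lt_Tq (q r : R) : 0 <= r -> (r%:E < Tq q (mixG F))%E ->
  (\int[F]_(mu in @halfline1 R) (expR (- r / mu))%:E < (q^-1 * expR (- r))%:E)%E.
Proof. by move=> r0 /lt_Tq_tail; rewrite mixG_tail. Qed.

Lemma integral_riemann_term_le (q tau : R) i : 0 < q -> 0 < tau ->
  (\int[F]_(mu in @halfline1 R) (riemann_term tau mu (Tq q (mixG F)) i)%:E
     <= (geometric (tau / q * expR (- tau)) (expR (- tau)) i)%:E)%E.
Proof.
move=> q0 tau0; rewrite /riemann_term; case: (boolP (_ < _)%E) => [lt_T|_]; last first.
  rewrite integral0 lee_fin /geometric /= !mulr_ge0 ?expR_ge0 ?exprn_ge0 //.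
  - exact: ltW.
  - by rewrite invr_ge0 ltW.
have mD := @measurable_halfline1 R.
under eq_integral do rewrite EFinM.
rewrite ge0_integralZl_EFin //; last 2 first.
- by apply/measurable_EFinP/measurable_funTS; exact: measurable_expR_div.
- exact: ltW.
have r0 : 0 <= i.+1%:R * tau by rewrite mulr_ge0 // ltW.
apply: le_trans (lee_wpmul2l _ (ltW (integral_expR_lt_Tq r0 lt_T))) _.
  by rewrite lee_fin ltW.
by rewrite -EFinM lee_fin -mulrN expRM_natl exprS /geometric /= !mulrA.
Qed.

Lemma integral_riemann_series_le (q tau : R) : 0 < q -> 0 < tau ->
  (\int[F]_(mu in @halfline1 R) \sum_(i <oo) (riemann_term tau mu (Tq q (mixG F)) i)%:E
     <= (q^-1 * (tau * expR (- tau) / (1 - expR (- tau))))%:E)%E.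
Proof.
move=> q0 tau0; have mD := @measurable_halfline1 R.
have term_ge0 i mu : (0 <= (riemann_term tau mu (Tq q (mixG F)) i)%:E)%E.
  by rewrite lee_fin riemann_term_ge0.
rewrite integral_nneseries //; last first.
  by move=> i; apply/measurable_EFinP/measurable_funTS; exact: measurable_riemann_term.
apply: le_trans (lee_nneseries _ (fun i _ => integral_riemann_term_le i q0 tau0)) _.
  by move=> i _ _; exact: integral_ge0.
apply: le_trans (nneseries_geometric_le _ _ _) _.
- by rewrite !mulr_ge0 ?invr_ge0 ?expR_ge0 // ltW.
- exact: expR_gt0.
- by rewrite expR_lt1 oppr_lt0.
by rewrite lee_fin !mulrA [q^-1 * tau]mulrC.
Qed.

End mixture_tail.

Lemma ereal_sup_ratio_fin (R : realType) (psi : R -> R) :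
    (forall mu, 1 <= mu -> 0 <= psi mu) ->
    (ereal_sup [set (psi mu / mu)%:E | mu in @halfline1 R] < +oo)%E ->
  exists s : R, [/\ 0 <= s,
    ereal_sup [set (psi mu / mu)%:E | mu in @halfline1 R] = s%:E
    & forall mu, 1 <= mu -> psi mu <= s * mu].
Proof.
move=> psi0; set S := ereal_sup _ => S_lt.
have S_ge mu : 1 <= mu -> ((psi mu / mu)%:E <= S)%E.
  by move=> mu1; apply: ereal_sup_ubound; exists mu => //; exact/halfline1P.
have S_ge0 : (0 <= S)%E.
  by apply: le_trans (S_ge 1 (lexx 1)); rewrite lee_fin divr_ge0 ?psi0.
have S_fin : S \is a fin_num by rewrite ge0_fin_numE.
exists (fine S); split; [exact: fine_ge0 | by rewrite fineK |].
move=> mu mu1; rewrite -ler_pdivrMr ?(lt_le_trans ltr01) // -lee_fin fineK //.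
exact: S_ge.
Qed.

Theorem lemma5p6 (R : realType) (q : R) (psi : R -> R) (F : probability R R)
    (tau : R) :
  0 < q < 1 ->
  measurable_fun (@halfline1 R) psi ->
  (forall mu, 1 <= mu -> 0 <= psi mu) ->
  (exists mu, 1 <= mu /\ psi mu != 0) ->
  (ereal_sup [set (psi mu / mu)%:E | mu in (@halfline1 R)] < +oo)%E ->
  F (@halfline1 R) = 1%E ->
  0 < tau -> (tau%:E < Tq q (mixG F))%E ->
  (\int[F]_(mu in (@halfline1 R))
      ((psi mu)%:E * ((expR (- tau / mu))%:E - expeR (- (Tq q (mixG F) * (mu^-1)%:E))))
   <= (q^-1)%:E * ereal_sup [set (psi mu / mu)%:E | mu in (@halfline1 R)]
      * (tau * expR (- tau) / (1 - expR (- tau)))%:E)%E.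
Proof.
move=> /andP[q0 _] m_psi psi0 _ S_lt F1 tau0 tauT.
have [s [s0 -> psi_le]] := ereal_sup_ratio_fin psi0 S_lt.
have mD := @measurable_halfline1 R.
have mu0 mu : @halfline1 R mu -> 0 < mu by move=> /halfline1P; exact: lt_le_trans.
set T := Tq q (mixG F) in tauT *.
rewrite (eq_integral (fun mu => (psi mu * expR_gap tau mu T)%:E)); last first.
  by move=> mu /[!inE] /mu0 mu_pos; rewrite expR_gapE // EFinM.
have m_series := measurable_riemann_series T tau0.
have {}m_series := measurable_funTS (D := @halfline1 R) m_series.
apply: (@le_trans _ _ (\int[F]_(mu in @halfline1 R)
    (s%:E * \sum_(i <oo) (riemann_term tau mu T i)%:E))%E).
  apply: ge0_le_integral => //.
  - move=> mu /[dup] /mu0 mu_pos /halfline1P mu1.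
    by rewrite lee_fin mulr_ge0 ?psi0 // expR_gap_ge0.
  - apply/measurable_EFinP/measurable_funM => //.
    by apply: measurable_funTS; exact: measurable_expR_gap.
  - exact: measurable_funeM.
  move=> mu /[dup] /mu0 mu_pos /halfline1P mu1.
  by apply: (le_mul_riemann_series tau0 mu_pos s0 (psi_le _ mu1) tauT).
rewrite ge0_integralZl_EFin //; last first.
  by move=> mu _; apply: nneseries_ge0 => i _ _; rewrite lee_fin riemann_term_ge0.
apply: le_trans (lee_wpmul2l _ (integral_riemann_series_le F1 q0 tau0)) _.
  by rewrite lee_fin.
by rewrite -!EFinM lee_fin mulrCA mulrA.
Qed.
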